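(* Let $x_1,\dots,x_k\in\ell^\infty$ with $|L_{x_i}|=n_i\in\mathbb{N}$ for $1\le i\le k$, and let $z=\sum_{i=1}^k a_ix_i$ with real coefficients and $a_k\ne0$. Then $$\frac{n_k}{n_1\cdots n_{k-1}}\le |L_z|\le n_1\cdots n_k.$$
   Context: $\ell^\infty$ is the space of bounded real sequences. For $x\in\ell^\infty$, $L_x$ denotes the set of accumulation points (subsequential limits) of $x$ and $|L_x|$ its cardinality. *)

From HB Require Import structures.
From mathcomp Require Import all_boot all_order all_algebra.
From mathcomp Require Import all_classical all_reals all_analysis.
Set Implicit Arguments. Unset Strict Implicit. Unset Printing Implicit Defensive.
Import Order.TTheory GRing.Theory Num.Theory.
Import numFieldNormedType.Exports.
Local Open Scope classical_set_scope.
Local Open Scope ring_scope.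

Definition bounded_seq (R : realType) (x : nat -> R) : Prop :=
  exists M : R, forall m, `|x m| <= M.

Definition acc_pts (R : realType) (x : nat -> R) : set R :=
  [set l | exists phi : nat -> nat,
      (forall m, (phi m < phi m.+1)%N) /\ (x \o phi) @ \oo --> l].

From HB Require Import structures.
From mathcomp Require Import all_boot all_order all_algebra.
From mathcomp Require Import all_classical all_reals all_analysis.
Set Implicit Arguments. Unset Strict Implicit. Unset Printing Implicit Defensive.
Import Order.TTheory GRing.Theory Num.Theory.
Import numFieldNormedType.Exports.
Local Open Scope classical_set_scope.
Local Open Scope ring_scope.

(* Extracting a common convergent subsequence of all the x_i shows that every
   point of L_z has the form sum_i a_i l_i with l_i in L_{x_i}, which gives
   the upper bound. Conversely, every c in L_{x_k} is the last coordinate of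
   such a family whose combination lies in L_z, so
   c = (w - sum_{i<k} a_i l_i) / a_k for some w in L_z: hence
   n_k <= |L_z| * n_1 ... n_{k-1}. *)

Definition increasing_index (phi : nat -> nat) :=
  forall m, (phi m < phi m.+1)%N.

Lemma increasing_index_comp (phi psi : nat -> nat) :
  increasing_index phi -> increasing_index psi -> increasing_index (phi \o psi).
Proof. by move=> hphi hpsi m; apply: (homo_ltn ltn_trans hphi). Qed.

Lemma increasing_index_ge (phi : nat -> nat) :
  increasing_index phi -> forall m, (m <= phi m)%N.
Proof. by move=> hphi; elim=> // m IH; apply: leq_ltn_trans IH (hphi m). Qed.

Lemma cvg_comp_increasing_index (T : topologicalType) (u : nat -> T) (c : T)
    (psi : nat -> nat) :
  increasing_index psi -> u @ \oo --> c -> (u \o psi) @ \oo --> c.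
Proof.
move=> hpsi hu P /hu [N _ HP]; exists N => // m /= Nm; apply: HP => /=.
by apply/(leq_trans Nm)/increasing_index_ge.
Qed.

Lemma acc_pts_subseq (R : realType) (y : nat -> R) (phi : nat -> nat) (l : R) :
  increasing_index phi -> (y \o phi) @ \oo --> l -> acc_pts y l.
Proof. by move=> hphi hl; exists phi. Qed.

Lemma bounded_seq_comp (R : realType) (y : nat -> R) (f : nat -> nat) :
  bounded_seq y -> bounded_seq (y \o f).
Proof. by move=> [M hM]; exists M => m; apply: hM. Qed.

Lemma bounded_seq_cvg_subseq (R : realType) (y : nat -> R) :
  bounded_seq y ->
  exists2 psi, increasing_index psi & exists l : R, (y \o psi) @ \oo --> l.
Proof.
move=> [M hM].
have bnd : bounded_fun y.
  exists M; split; first exact: num_real.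
  by move=> r Mr m _ /=; apply: le_trans (hM m) (ltW Mr).
have [psi /increasing_seqP hpsi /cvg_ex [l hl]] := bolzano_weierstrass bnd.
by exists psi => //; exists l.
Qed.

Lemma bounded_family_cvg_subseq (R : realType) (I : eqType) (s : seq I)
    (x : I -> nat -> R) :
  (forall i, bounded_seq (x i)) ->
  exists2 psi, increasing_index psi &
    exists l : I -> R, forall i, i \in s -> (x i \o psi) @ \oo --> l i.
Proof.
move=> hb; elim: s => [|i0 s [psi hpsi [l hl]]].
  by exists id => //; exists (fun=> 0).
have [psi' hpsi' [c hc]] :=
  bounded_seq_cvg_subseq (bounded_seq_comp psi (hb i0)).
exists (psi \o psi'); first exact: increasing_index_comp.
exists (fun i => if i == i0 then c else l i) => i; rewrite inE.
case: eqP => [-> _ //|_ /= ins].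
exact: cvg_comp_increasing_index (hl i ins).
Qed.

Lemma card_eq_II_image (T : pointedType) (A : set T) (m : nat) :
  (A #= `I_m)%card -> exists e : nat -> T, A = e @` `I_m.
Proof.
move/card_esym/pcard_eqP => [f]; exists f.
apply/seteqP; split=> [t At|_ [j jm <-]]; last exact: funS.
by have [j jm <-] := (@surj _ _ _ _ f) t At; exists j.
Qed.

Lemma card_le_range (T : finType) (U : Type) (G : T -> U) (A : set U) :
  A `<=` range G -> exists N, (A #= `I_N)%card /\ (N <= #|T|)%N.
Proof.
move=> AG.
have AT : (A #<= `I_#|T|)%card.
  rewrite (card_le_eqr card_II).
  apply: card_le_trans (card_image_le (G \o enum_val) setT).
  apply: subset_card_le => _ /AG [t _ <-].
  by exists (enum_rank t) => //=; rewrite enum_rankK.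
have [N AN] := card_le_finite AT (finite_II _).
by exists N; split=> //; rewrite -card_le_II -(card_le_eql AN).
Qed.

Lemma card_II_le_range (T : finType) (U : Type) (G : T -> U) (A : set U)
    (m : nat) :
  (A #= `I_m)%card -> A `<=` range G -> (m <= #|T|)%N.
Proof.
move=> Am /card_le_range [N [AN NT]].
by have /card_eq_II -> : (`I_m #= `I_N)%card := card_eq_trans (card_esym Am) AN.
Qed.

Lemma card_dffun_ord (I : finType) (m : I -> nat) :
  #|{dffun forall i : I, 'I_(m i)}| = (\prod_i m i)%N.
Proof.
rewrite card_dep_ffun foldrE big_map big_enum /=.
by under eq_bigr do rewrite card_ord.
Qed.

Lemma ler_nat_div (R : numFieldType) (m N P : nat) :
  (m <= N * P)%N -> m%:R / P%:R <= N%:R :> R.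
Proof.
move=> hle; have [->|P0] := eqVneq P 0%N; first by rewrite invr0 mulr0 ler0n.
by rewrite ler_pdivrMr ?ltr0n ?lt0n // -natrM ler_nat.
Qed.

Section accumulation_points_lincomb.
Variables (R : realType) (I : finType) (x : I -> nat -> R) (a : I -> R).
Hypothesis hb : forall i, bounded_seq (x i).

Local Notation z := (fun m => \sum_i a i * x i m).

Lemma cvg_lincomb (phi : nat -> nat) (l : I -> R) :
  (forall i, (x i \o phi) @ \oo --> l i) ->
  (z \o phi) @ \oo --> \sum_i a i * l i.
Proof.
move=> hl.
apply: (@cvg_big _ _ +%R 0 xpredT add_continuous _ _ _
  (fun i m => a i * x i (phi m))) => // i _.
exact: cvgM (cvg_cst _) (hl i).
Qed.

Lemma joint_cvg_subseq (phi : nat -> nat) : increasing_index phi ->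
  exists2 psi, increasing_index psi & exists l : I -> R,
    forall i, acc_pts (x i) (l i) /\ (x i \o (phi \o psi)) @ \oo --> l i.
Proof.
move=> hphi.
have [psi hpsi [l hl]] := bounded_family_cvg_subseq (enum I)
  (fun i => bounded_seq_comp phi (hb i)).
exists psi => //; exists l => i; have hli := hl i (mem_enum _ i).
by split=> //; apply: acc_pts_subseq (increasing_index_comp hphi hpsi) _.
Qed.

Lemma acc_pts_lincomb_sub (c : R) : acc_pts z c ->
  exists l : I -> R, (forall i, acc_pts (x i) (l i)) /\ c = \sum_i a i * l i.
Proof.
move=> [phi [hphi hc]]; have [psi hpsi [l hl]] := joint_cvg_subseq hphi.
exists l; split=> [i|]; first by case: (hl i).
have hzl : (z \o (phi \o psi)) @ \oo --> \sum_i a i * l i.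
  by apply: cvg_lincomb => i; case: (hl i).
have hzc : (z \o (phi \o psi)) @ \oo --> c := cvg_comp_increasing_index hpsi hc.
by rewrite (cvg_unique (@Rhausdorff R) hzc hzl).
Qed.

Lemma acc_pts_lincomb_sup (i0 : I) (c : R) : acc_pts (x i0) c ->
  exists l : I -> R, [/\ forall i, acc_pts (x i) (l i), l i0 = c &
    acc_pts z (\sum_i a i * l i)].
Proof.
move=> [phi [hphi hc]]; have [psi hpsi [l hl]] := joint_cvg_subseq hphi.
exists l; split=> [i||]; first by case: (hl i).
  have hxc : (x i0 \o (phi \o psi)) @ \oo --> c :=
    cvg_comp_increasing_index hpsi hc.
  by rewrite (cvg_unique (@Rhausdorff R) (hl i0).2 hxc).
apply: acc_pts_subseq (increasing_index_comp hphi hpsi) _.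
by apply: cvg_lincomb => i; case: (hl i).
Qed.

Variable n : I -> nat.
Hypothesis hn : forall i, (acc_pts (x i) #= `I_(n i))%card.

Let enum_acc_pts :
  exists e : I -> nat -> R, forall i, acc_pts (x i) = e i @` `I_(n i).
Proof. exact: fin_all_exists (fun i => card_eq_II_image (hn i)). Qed.

Lemma card_acc_pts_lincomb_le :
  exists N, (acc_pts z #= `I_N)%card /\ (N <= \prod_i n i)%N.
Proof.
have [e he] := enum_acc_pts.
pose G (t : {dffun forall i, 'I_(n i)}) := \sum_i a i * e i (t i).
rewrite -card_dffun_ord; apply: (@card_le_range _ _ G).
move=> c /acc_pts_lincomb_sub [l [hl ->]].
have /fin_all_exists [t ht] : forall i, exists j : 'I_(n i), e i j = l i.
  by move=> i; move: (hl i); rewrite he => -[j jn <-]; exists (Ordinal jn).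
by exists [ffun i => t i] => //; apply: eq_bigr => i _; rewrite ffunE ht.
Qed.

Lemma card_acc_pts_lincomb_ge (i0 : I) (N : nat) : a i0 != 0 ->
  (acc_pts z #= `I_N)%card -> (n i0 <= N * \prod_(i | i != i0) n i)%N.
Proof.
move=> ai0 zN; have [e he] := enum_acc_pts; have [w hw] := card_eq_II_image zN.
(* The dummy factor 'I_1 at i0 makes #|T| = N * prod_(i != i0) n_i. *)
pose T : finType :=
  ('I_N * {dffun forall i, 'I_(if i == i0 then 1 else n i)})%type.
pose G (p : T) := (w p.1 - \sum_(i | i != i0) a i * e i (p.2 i)) / a i0.
have -> : (N * \prod_(i | i != i0) n i)%N = #|T|.
  rewrite card_prod card_ord card_dffun_ord [in RHS](bigD1 i0) //= eqxx mul1n.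
  by congr (_ * _)%N; apply: eq_bigr => i /negbTE ->.
apply: (@card_II_le_range _ _ G _ _ (hn i0)).
move=> _ /acc_pts_lincomb_sup [l [hl <-]]; rewrite hw => -[j jN wj].
have /fin_all_exists [t ht] : forall i,
    exists u : 'I_(if i == i0 then 1 else n i), i != i0 -> e i u = l i.
  move=> i; case: (i == i0) => /=; first by exists ord0.
  by move: (hl i); rewrite he => -[u un <-]; exists (Ordinal un).
exists (Ordinal jN, [ffun i => t i]) => //; rewrite /G /=.
have -> : \sum_(i | i != i0) a i * e i ([ffun i => t i] i) =
           \sum_(i | i != i0) a i * l i.
  by apply: eq_bigr => i hi; rewrite ffunE ht.
by rewrite wj (bigD1 i0) //= addrK mulrC mulKf.
Qed.

End accumulation_points_lincomb.

Theorem lemma2p5 (R : realType) (k : nat) (x : 'I_k.+1 -> nat -> R)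
  (n : 'I_k.+1 -> nat) (a : 'I_k.+1 -> R)
  (hb : forall i, bounded_seq (x i))
  (hn : forall i, (acc_pts (x i) #= `I_(n i))%card)
  (hak : a ord_max != 0) :
  let z := fun m => \sum_(i < k.+1) a i * x i m in
  exists N : nat, (acc_pts z #= `I_N)%card /\
    (n ord_max)%:R / (\prod_(i < k.+1 | i != ord_max) n i)%:R <= (N%:R : R) /\
    (N <= \prod_(i < k.+1) n i)%N.
Proof.
move=> z; have [N [zN Nle]] := card_acc_pts_lincomb_le a hb hn.
exists N; split=> //; split=> //.
exact/ler_nat_div/(card_acc_pts_lincomb_ge hb hn hak zN).
Qed.
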